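(* Let $n\ge 2$ and $m_1,\dots,m_n\ge1$, $m=m_1+\dots+m_n$. Assume: (a) each $h_i:Q_q^{m_i}\to Q_q$ ($i=1,\dots,n$) is an $m_i$-ary iterated group (for a group on $Q_q$ with identity $0$); (b) $f:Q_q^n\to Q_q$ is an isotopically transitive $n$-ary quasigroup, with $G_f$ the autotopy group of its graph $\{(x_0,x_1,\dots,x_n): x_0=f(x_1,\dots,x_n)\}$, whose elements are written $\overline\sigma=(\sigma_0,\sigma_1,\dots,\sigma_n)$; (c) for every $i\in\{1,\dots,n\}$ and every $\overline\sigma\in G_f$ there exists an isotopism $\overline\tau_i$ of $Q_q^{m_i}$ with $h_i(\overline\tau_i\overline z_i)=\sigma_i h_i(\overline z_i)$ for all $\overline z_i\in Q_q^{m_i}$. Then the $m$-ary quasigroup $g(\overline z_1,\dots,\overline z_n)=f(h_1(\overline z_1),\dots,h_n(\overline z_n))$ is isotopically transitive.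
   Context: An $n$-ary quasigroup of order $q$ is a function $f:Q_q^n\to Q_q$ such that $f(\overline x)\ne f(\overline y)$ whenever $\overline x,\overline y$ differ in exactly one coordinate; it is called isotopically transitive if its graph $\{(x_0,\overline x): x_0=f(\overline x)\}\subseteq Q_q^{n+1}$ is isotopically transitive. An $m$-ary iterated group is a function $(z_1,\dots,z_m)\mapsto z_1\circ\cdots\circ z_m$ for a group operation $\circ$ on $Q_q$. An isotopism of $Q_q^N$ is a map $\overline{x}\mapsto(\tau_1x_1,\dots,\tau_Nx_N)$ with $\tau_i$ permutations of $Q_q$; the autotopy group of $A\subseteq Q_q^N$ is the group of isotopisms mapping $A$ onto $A$, and $A$ is isotopically transitive if this group acts transitively on $A$. *)

From HB Require Import structures.
From mathcomp Require Import all_boot all_order all_fingroup.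
Set Implicit Arguments. Unset Strict Implicit. Unset Printing Implicit Defensive.

(* Q_q is modelled as the ordinal type 'I_q = {0,...,q-1}.
   A point of Q_q^N (coordinates indexed by a finite type I) is a
   finite function {ffun I -> 'I_q}. *)

Definition differ_in_one (I : finType) (T : eqType) (x y : {ffun I -> T}) : bool :=
  #|[set i | x i != y i]| == 1.

Definition is_quasigroup (q : nat) (I : finType) (f : {ffun I -> 'I_q} -> 'I_q) : Prop :=
  forall x y : {ffun I -> 'I_q}, differ_in_one x y -> f x != f y.

Definition isotopism (q : nat) (I : finType) := I -> {perm 'I_q}.

Definition iso_apply (q : nat) (I : finType) (tau : isotopism q I)
  (x : {ffun I -> 'I_q}) : {ffun I -> 'I_q} := [ffun i => tau i (x i)].

Definition is_autotopy (q : nat) (I : finType) (tau : isotopism q I)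
  (A : {set {ffun I -> 'I_q}}) : Prop :=
  [set iso_apply tau x | x in A] = A.

Definition iso_transitive (q : nat) (I : finType) (A : {set {ffun I -> 'I_q}}) : Prop :=
  forall x y, x \in A -> y \in A ->
    exists tau : isotopism q I, is_autotopy tau A /\ iso_apply tau x = y.

(* graph {(x_0,x_1,...,x_n) : x_0 = f(x_1,...,x_n)} of an n-ary function,
   a subset of Q_q^{n+1}, coordinate 0 being x_0 *)
Definition qgraph (q n : nat) (f : {ffun 'I_n -> 'I_q} -> 'I_q) : {set {ffun 'I_n.+1 -> 'I_q}} :=
  [set x : {ffun 'I_n.+1 -> 'I_q} | x ord0 == f [ffun i => x (lift ord0 i)]].

Definition iso_transitive_qg (q n : nat) (f : {ffun 'I_n -> 'I_q} -> 'I_q) : Prop :=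
  iso_transitive (qgraph f).

Definition is_group_op (T : Type) (op : T -> T -> T) (e : T) : Prop :=
  (forall x y z, op x (op y z) = op (op x y) z) /\
  (forall x, op e x = x /\ op x e = x) /\
  (forall x, exists y, op x y = e /\ op y x = e).

Definition is_iterated_group (q m : nat) (h : {ffun 'I_m -> 'I_q} -> 'I_q) : Prop :=
  exists (op : 'I_q -> 'I_q -> 'I_q) (e : 'I_q),
    is_group_op op e /\ nat_of_ord e = 0 /\
    forall z : {ffun 'I_m -> 'I_q},
      h z = foldr op e [seq z j | j <- enum 'I_m].

(* the composition g(z_1,...,z_n) = f(h_1(z_1),...,h_n(z_n)), with the m
   arguments (m = m_1+...+m_n) concatenated block by block *)
Definition compose_qg (q n : nat) (mi : 'I_n -> nat)
  (f : {ffun 'I_n -> 'I_q} -> 'I_q)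
  (h : forall i : 'I_n, {ffun 'I_(mi i) -> 'I_q} -> 'I_q)
  (z : {ffun 'I_(\sum_(i < n) mi i) -> 'I_q}) : 'I_q :=
  f [ffun i => h i [ffun j => z (tagnat.Rank i j)]].

From mathcomp Require Import all_boot all_order all_fingroup.
From Stdlib Require Import ClassicalEpsilon ChoiceFacts.
Set Implicit Arguments. Unset Strict Implicit. Unset Printing Implicit Defensive.

(* Write a point of Q_q^(m+1) as (x_0, z_1, ..., z_n) with blocks
   z_i of length m_i, and let  reduce (x_0, z) = (x_0, h_1(z_1), ..., h_n(z_n)).
   Then x lies in the graph of g iff  reduce x  lies in the graph of f.
   1. Iterated groups: a product z_1 o ... o z_m changes when exactly one
      factor changes (so h_i is a quasigroup, hence so is g), and whenever
      l o h(a) = h(b) some isotopism maps a to b while multiplying every value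
      of h on the left by l.  With l = 1, the isotopisms preserving h act
      transitively on each fibre of h.
   2. Given x, y in the graph of g, pick sigma in G_f with
      sigma (reduce x) = reduce y.  By (c) and step 1, for every block i there
      is an isotopism C_i covering sigma_i (h_i (C_i z) = sigma_i (h_i z)) and
      mapping the block x_i to y_i.  The isotopism (sigma_0, C_1, ..., C_n) of
      Q_q^(m+1) then satisfies  reduce (T z) = sigma (reduce z),  so it is an
      autotopy of the graph of g, and it maps x to y. *)

Section IteratedProduct.
Variables (T : finType) (op : T -> T -> T) (e : T).
Hypothesis op_group : is_group_op op e.

Lemma opA x y z : op x (op y z) = op (op x y) z.
Proof. by case: op_group. Qed.

Lemma op1l x : op e x = x.
Proof. by case: op_group => _ [unit _]; case: (unit x). Qed.

Lemma op1r x : op x e = x.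
Proof. by case: op_group => _ [unit _]; case: (unit x). Qed.

Lemma op_inverse x : exists y, op x y = e /\ op y x = e.
Proof. by case: op_group => _ [_ inv]. Qed.

Lemma op_cancel_l a x y : op a x = op a y -> x = y.
Proof.
move=> eq_axy; have [a' [_ a'a]] := op_inverse a.
by rewrite -(op1l x) -(op1l y) -a'a -!opA eq_axy.
Qed.

Lemma op_cancel_r a x y : op x a = op y a -> x = y.
Proof.
move=> eq_xay; have [a' [aa' _]] := op_inverse a.
by rewrite -(op1r x) -(op1r y) -aa' !opA eq_xay.
Qed.

Definition iprod m (z : {ffun 'I_m -> T}) : T :=
  foldr op e [seq z j | j <- enum 'I_m].

Lemma iprod0 (z : {ffun 'I_0 -> T}) : iprod z = e.
Proof. by rewrite /iprod enum_ord0. Qed.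

Lemma iprodS m (z : {ffun 'I_m.+1 -> T}) :
  iprod z = op (z ord0) (iprod [ffun j => z (lift ord0 j)]).
Proof.
rewrite /iprod enum_ordSl /= -map_comp; congr (op _ (foldr _ _ _)).
by apply: eq_map => j; rewrite /= ffunE.
Qed.

Lemma iprod_differ m (z z' : {ffun 'I_m -> T}) k :
  z k != z' k -> (forall i, i != k -> z i = z' i) -> iprod z != iprod z'.
Proof.
elim: m z z' k => [|m IHm] z z' k; first by case: k.
rewrite !iprodS; case: (unliftP ord0 k) => [k'|] -> neq_k eq_other.
  have neq_tail : iprod [ffun j => z (lift ord0 j)] != iprod [ffun j => z' (lift ord0 j)].
    apply: (IHm _ _ k'); first by rewrite !ffunE.
    by move=> i ne_ik; rewrite !ffunE eq_other // (inj_eq (@lift_inj _ ord0)).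
  by rewrite (eq_other ord0) ?neq_lift //; apply: contra_neq neq_tail => /op_cancel_l.
have -> : [ffun j => z (lift ord0 j)] = [ffun j => z' (lift ord0 j)].
  by apply/ffunP => j; rewrite !ffunE eq_other ?neq_lift.
by apply: contra_neq neq_k => /op_cancel_r.
Qed.

(* The factor l is what makes the induction on m go through. *)
Lemma iprod_translate m (a b : {ffun 'I_m -> T}) l :
  op l (iprod a) = iprod b ->
  exists tau : 'I_m -> {perm T}, (forall j, tau j (a j) = b j) /\
    forall z : {ffun 'I_m -> T}, iprod [ffun j => tau j (z j)] = op l (iprod z).
Proof.
elim: m a b l => [|m IHm] a b l.
  rewrite !iprod0 op1r => ->; exists (fun=> 1%g); split; first by case.
  by move=> z; rewrite !iprod0 op1l.
rewrite !iprodS => eq_ab.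
have [b0' [b0b0' b0'b0]] := op_inverse (b ord0).
(* l o a_0 = b_0 o l', so the tail of a must be translated by l' *)
pose l' := op b0' (op l (a ord0)).
have head_eq : op l (a ord0) = op (b ord0) l' by rewrite /l' opA b0b0' op1l.
have [tau' [tau'_ab tau'_prod]] : exists tau' : 'I_m -> {perm T},
    (forall j, tau' j (a (lift ord0 j)) = b (lift ord0 j)) /\
    forall z : {ffun 'I_m -> T},
      iprod [ffun j => tau' j (z j)] = op l' (iprod z).
  have eq_tail : op l' (iprod [ffun j => a (lift ord0 j)]) =
                 iprod [ffun j => b (lift ord0 j)].
    by rewrite /l' -!opA eq_ab opA b0'b0 op1l.
  have [tau' [tau'_ab tau'_prod]] := IHm _ _ _ eq_tail.
  by exists tau'; split=> // j; have := tau'_ab j; rewrite !ffunE.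
have [l'' [l'l'' l''l']] := op_inverse l'.
have head_inj : injective (fun x => op (op l x) l'') by move=> x y /op_cancel_r/op_cancel_l.
pose tau j := if unlift ord0 j is Some j' then tau' j' else perm head_inj.
have tau0 : tau ord0 = perm head_inj by rewrite /tau unlift_none.
have tauS j : tau (lift ord0 j) = tau' j by rewrite /tau liftK.
exists tau; split.
  move=> j; case: (unliftP ord0 j) => [j'|] ->; first by rewrite tauS tau'_ab.
  by rewrite tau0 permE /= head_eq -opA l'l'' op1r.
move=> z; rewrite iprodS ffunE tau0 permE /=.
have -> : [ffun j => [ffun j0 => tau j0 (z j0)] (lift ord0 j)] =
          [ffun j => tau' j ([ffun j0 => z (lift ord0 j0)] j)].
  by apply/ffunP => j; rewrite !ffunE tauS.
by rewrite tau'_prod iprodS opA -(opA _ l'' l') l''l' op1r -opA.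
Qed.

End IteratedProduct.

Lemma differP (I : finType) (T : eqType) (x y : {ffun I -> T}) :
  differ_in_one x y <-> exists k, x k != y k /\ forall i, i != k -> x i = y i.
Proof.
rewrite /differ_in_one; split.
  move/cards1P => [k diff_k]; exists k; split.
    by have := set11 k; rewrite -diff_k inE.
  move=> i ne_ik; apply/eqP; apply: contraNT ne_ik => neq_i.
  by rewrite -in_set1 -diff_k inE.
move=> [k [neq_k eq_other]]; apply/cards1P; exists k; apply/setP => i.
rewrite !inE; have [->|ne_ik] := eqVneq i k; first by rewrite neq_k.
by rewrite eq_other // eqxx.
Qed.

Lemma iso_applyM (q : nat) (I : finType) (tau rho : isotopism q I) x :
  iso_apply (fun i => tau i * rho i)%g x = iso_apply rho (iso_apply tau x).
Proof. by apply/ffunP => i; rewrite !ffunE permM. Qed.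

(* An isotopism mapping A into A is an autotopy of A: it is injective on the
   finite set A, so its image is all of A. *)
Lemma autotopy_of_stable (q : nat) (I : finType) (tau : isotopism q I)
    (A : {set {ffun I -> 'I_q}}) :
  (forall x, x \in A -> iso_apply tau x \in A) -> is_autotopy tau A.
Proof.
move=> tauA; apply/eqP; rewrite eqEcard card_imset ?leqnn ?andbT.
  by apply/subsetP => _ /imsetP [x Ax ->]; apply: tauA.
move=> x y /ffunP eq_xy; apply/ffunP => i.
by have := eq_xy i; rewrite !ffunE => /perm_inj.
Qed.

Lemma autotopy_pullback (q : nat) (I J : finType)
    (A : {set {ffun I -> 'I_q}}) (B : {set {ffun J -> 'I_q}})
    (U : {ffun I -> 'I_q} -> {ffun J -> 'I_q})
    (T : isotopism q I) (sigma : isotopism q J) :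
  (forall x, (U x \in B) = (x \in A)) ->
  (forall z, U (iso_apply T z) = iso_apply sigma (U z)) ->
  is_autotopy sigma B -> is_autotopy T A.
Proof.
move=> UAB U_T sigmaB; apply: autotopy_of_stable => x Ax.
by rewrite -UAB U_T -sigmaB imset_f // UAB.
Qed.

Section IteratedGroupFunction.
Variables (q m : nat) (h : {ffun 'I_m -> 'I_q} -> 'I_q).
Hypothesis h_group : is_iterated_group h.

Lemma iterated_group_quasigroup : is_quasigroup h.
Proof.
have [op [e [op_group [_ h_prod]]]] := h_group.
move=> z z' /differP [k [neq_k eq_other]]; rewrite !h_prod.
exact: (iprod_differ op_group neq_k).
Qed.

Lemma iterated_group_fibre a b : h a = h b ->
  exists rho : isotopism q 'I_m,
    iso_apply rho a = b /\ forall z, h (iso_apply rho z) = h z.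
Proof.
have [op [e [op_group [_ h_prod]]]] := h_group.
have h_iprod z : h z = iprod op e z := h_prod z.
rewrite !h_iprod -(op1l op_group (iprod op e a)) => eq_ab.
have [rho [rho_ab rho_prod]] := iprod_translate op_group eq_ab.
exists rho; split; first by apply/ffunP => j; rewrite ffunE rho_ab.
by move=> z; rewrite !h_iprod -(op1l op_group (iprod op e z)) -rho_prod.
Qed.

Lemma covering_isotopism (s : {perm 'I_q}) (tau : isotopism q 'I_m) a b :
  (forall z, h (iso_apply tau z) = s (h z)) -> s (h a) = h b ->
  exists C : isotopism q 'I_m,
    (forall z, h (iso_apply C z) = s (h z)) /\ iso_apply C a = b.
Proof.
move=> tau_covers eq_ab; rewrite -tau_covers in eq_ab.
have [rho [rho_ab rho_h]] := iterated_group_fibre eq_ab.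
exists (fun j => tau j * rho j)%g; split; last by rewrite iso_applyM.
by move=> z; rewrite iso_applyM rho_h.
Qed.

End IteratedGroupFunction.

Section Composition.
Variables (q n : nat) (mi : 'I_n -> nat).
Variables (f : {ffun 'I_n -> 'I_q} -> 'I_q)
          (h : forall i : 'I_n, {ffun 'I_(mi i) -> 'I_q} -> 'I_q).
Arguments h : clear implicits.

Local Notation m := (\sum_(i < n) mi i).

Definition block (z : {ffun 'I_m -> 'I_q}) (i : 'I_n) : {ffun 'I_(mi i) -> 'I_q} :=
  [ffun j => z (tagnat.Rank i j)].

Definition tail (k : nat) (x : {ffun 'I_k.+1 -> 'I_q}) : {ffun 'I_k -> 'I_q} :=
  [ffun j => x (lift ord0 j)].

(* A composition of quasigroups is a quasigroup: a change in one coordinate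
   changes exactly one block, hence exactly one argument of f. *)
Lemma compose_quasigroup :
  is_quasigroup f -> (forall i : 'I_n, is_quasigroup (h i)) -> is_quasigroup (compose_qg f h).
Proof.
move=> f_qg h_qg z z' /differP [k [neq_k eq_other]].
rewrite -(tagnat.sig2K k) in neq_k eq_other.
move: (tagnat.sig1 k) (tagnat.sig2 k) neq_k eq_other => i0 j0 neq_k eq_other.
apply: f_qg; apply/differP; exists i0; split.
  rewrite !ffunE; apply: h_qg; apply/differP; exists j0; split; first by rewrite !ffunE.
  move=> j ne_j; rewrite !ffunE; apply: eq_other.
  by rewrite -val_eqE tagnat.eq_Rank eqxx /= val_eqE.
move=> i ne_i; rewrite !ffunE; congr (h i _); apply/ffunP => j; rewrite !ffunE.
by apply: eq_other; rewrite -val_eqE tagnat.eq_Rank (negbTE ne_i).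
Qed.

Definition reduce (x : {ffun 'I_m.+1 -> 'I_q}) : {ffun 'I_n.+1 -> 'I_q} :=
  [ffun k => if unlift ord0 k is Some i then h i (block (tail x) i) else x ord0].

Lemma reduce_head x : reduce x ord0 = x ord0.
Proof. by rewrite ffunE unlift_none. Qed.

Lemma reduce_lift x i : reduce x (lift ord0 i) = h i (block (tail x) i).
Proof. by rewrite ffunE liftK. Qed.

Lemma reduce_graph x : (reduce x \in qgraph f) = (x \in qgraph (compose_qg f h)).
Proof.
rewrite !inE reduce_head; congr (_ == f _).
by apply/ffunP => i; rewrite !ffunE liftK.
Qed.

Lemma point_eq (x y : {ffun 'I_m.+1 -> 'I_q}) :
  x ord0 = y ord0 -> (forall i, block (tail x) i = block (tail y) i) -> x = y.
Proof.
move=> eq_head eq_blocks; apply/ffunP => k.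
case: (unliftP ord0 k) => [k'|] -> //; rewrite -(tagnat.sig2K k').
by have /ffunP := eq_blocks (tagnat.sig1 k'); move/(_ (tagnat.sig2 k')); rewrite !ffunE.
Qed.

Definition concat_iso (s0 : {perm 'I_q}) (C : forall i, isotopism q 'I_(mi i)) :
    isotopism q 'I_m.+1 :=
  fun k => if unlift ord0 k is Some k' then
    C (tag (tagnat.sig k')) (tagged (tagnat.sig k')) else s0.

Lemma concat_iso_head s0 C x : iso_apply (concat_iso s0 C) x ord0 = s0 (x ord0).
Proof. by rewrite ffunE /concat_iso unlift_none. Qed.

Lemma concat_iso_block s0 C x i :
  block (tail (iso_apply (concat_iso s0 C) x)) i = iso_apply (C i) (block (tail x) i).
Proof. by apply/ffunP => j; rewrite !ffunE /concat_iso liftK tagnat.rankK. Qed.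

Lemma reduce_concat_iso (sigma : isotopism q 'I_n.+1) C :
  (forall i z, h i (iso_apply (C i) z) = sigma (lift ord0 i) (h i z)) ->
  forall z, reduce (iso_apply (concat_iso (sigma ord0) C) z) = iso_apply sigma (reduce z).
Proof.
move=> C_covers z; apply/ffunP => k; rewrite [RHS]ffunE.
case: (unliftP ord0 k) => [i|] ->; last by rewrite !reduce_head concat_iso_head.
by rewrite !reduce_lift concat_iso_block C_covers.
Qed.

End Composition.

(* Theorem 9. *)
Theorem mainTheorem9 (q n : nat) (mi : 'I_n -> nat)
  (f : {ffun 'I_n -> 'I_q} -> 'I_q)
  (h : forall i : 'I_n, {ffun 'I_(mi i) -> 'I_q} -> 'I_q) :
  2 <= n ->
  (forall i, 1 <= mi i) ->
  (forall i, is_iterated_group (h i)) ->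
  is_quasigroup f ->
  iso_transitive_qg f ->
  (forall (i : 'I_n) (sigma : isotopism q 'I_n.+1),
     is_autotopy sigma (qgraph f) ->
     exists tau : isotopism q 'I_(mi i),
       forall z : {ffun 'I_(mi i) -> 'I_q},
         h i (iso_apply tau z) = sigma (lift ord0 i) (h i z)) ->
  is_quasigroup (compose_qg f h) /\ iso_transitive_qg (compose_qg f h).
Proof.
move=> _ _ h_group f_qg f_transitive h_covers; split.
  by apply: compose_quasigroup => // i; apply: iterated_group_quasigroup.
move=> x y gx gy; rewrite -!(reduce_graph f h) in gx gy.
have [sigma [sigma_aut sigma_xy]] := f_transitive _ _ gx gy.
have block_iso i : exists Ci : isotopism q 'I_(mi i),
    (forall z, h i (iso_apply Ci z) = sigma (lift ord0 i) (h i z)) /\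
    iso_apply Ci (block (tail x) i) = block (tail y) i.
  have [tau tau_covers] := h_covers i sigma sigma_aut.
  apply: (covering_isotopism (h_group i) tau_covers).
  by rewrite -!reduce_lift -sigma_xy [RHS]ffunE.
have [C C_spec] := non_dep_dep_functional_choice choice _ _ block_iso.
have reduce_T := reduce_concat_iso (fun i => (C_spec i).1).
exists (concat_iso (sigma ord0) C); split.
  exact: autotopy_pullback (reduce_graph f h) reduce_T sigma_aut.
apply: point_eq => [|i]; last by rewrite concat_iso_block (C_spec i).2.
by rewrite concat_iso_head -(reduce_head h y) -sigma_xy ffunE reduce_head.
Qed.
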